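(* For any positive integers $m > s$, $f(m,s) \ge 1/3$.
   Context: The muffin problem with $m$ muffins and $s$ students (positive integers) asks to cut each of $m$ muffins of size $1$ into finitely many pieces of positive size and to assign every piece to one of $s$ students so that each student receives pieces of total size $m/s$. $f(m,s)$ denotes the maximum, over all such divisions and assignments, of the size of the smallest piece. *)

From HB Require Import structures.
From mathcomp Require Import all_boot all_order all_algebra.
From mathcomp Require Import boolp classical_sets reals.

Set Implicit Arguments.
Unset Strict Implicit.
Unset Printing Implicit Defensive.

Import Order.TTheory GRing.Theory Num.Theory.
Local Open Scope ring_scope.
Local Open Scope classical_set_scope.

(* A piece: (muffin it is cut from, student it is assigned to, size). *)
Definition piece (R : realType) (m s : nat) : Type := ('I_m * 'I_s * R)%type.

Definition division (R : realType) (m s : nat) (ps : seq (piece R m s)) : Prop :=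
  (forall p, p \in ps -> 0 < p.2) /\
  (forall j : 'I_m, \sum_(p <- ps | p.1.1 == j) p.2 = 1) /\
  (forall i : 'I_s, \sum_(p <- ps | p.1.2 == i) p.2 = m%:R / s%:R).

Definition smallest_piece (R : realType) (m s : nat) (ps : seq (piece R m s)) (x : R) : Prop :=
  x \in [seq p.2 | p <- ps] /\ (forall p, p \in ps -> x <= p.2).

(* f(m,s): the supremum (= maximum, by the paper) over all divisions of the
   size of the smallest piece. *)
Definition muffin_f (R : realType) (m s : nat) : R :=
  sup [set x : R | exists ps : seq (piece R m s), division ps /\ smallest_piece ps x].

(* Measure in thirds of a muffin, so that each student is owed 3m/s thirds, and
   write 3mi = Q_i s + a_i with 0 <= a_i < s.  Cut muffins s, ..., m-1 into
   thirds, numbered consecutively, and give student i the thirds numbered from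
   Q_i - 3i up to Q_(i+1) - 3(i+1); these bounds increase from 0 to 3(m-s)
   because m >= s.  Student i is then short 3 + (a_(i+1) - a_i)/s thirds, and
   muffin i < s makes up for it: its piece (2s - a_i)/(3s) goes to student i and
   its piece (s + a_i)/(3s) to student i - 1 (mod s).  As 0 <= a_i < s, no piece
   is smaller than 1/3. *)

From mathcomp Require Import all_boot all_order all_algebra.
From mathcomp Require Import boolp classical_sets reals.
From mathcomp Require Import zify ring.

Set Implicit Arguments.
Unset Strict Implicit.
Unset Printing Implicit Defensive.

Import Order.TTheory GRing.Theory Num.Theory.
Local Open Scope ring_scope.

Section DivisionLowerBound.
Variables (R : realType) (m s : nat).
Implicit Types (ps : seq (piece R m s)) (x : R).

Lemma division_piece_le1 ps p : division ps -> p \in ps -> p.2 <= 1.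
Proof.
case=> ps_gt0 [muffin_sum _] p_ps; rewrite -(muffin_sum p.1.1).
rewrite (perm_big _ (perm_to_rem p_ps)) big_cons eqxx lerDl big_seq_cond.
by apply: sumr_ge0 => q /andP[/mem_rem/ps_gt0/ltW].
Qed.

Lemma le_muffin_f ps x : division ps -> smallest_piece ps x -> x <= muffin_f R m s.
Proof.
move=> dps psx; apply: ub_le_sup; last by exists ps.
by exists 1 => _ [qs [dqs [/mapP[q q_qs ->] _]]]; exact: division_piece_le1 dqs q_qs.
Qed.

Lemma muffin_f_ge_shares (W : 'I_m -> 'I_s -> R) c : (0 < m)%N ->
    (forall j i, 0 <= W j i) -> (forall j i, W j i != 0 -> c <= W j i) ->
    (forall j, \sum_i W j i = 1) -> (forall i, \sum_j W j i = m%:R / s%:R) ->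
  c <= muffin_f R m s.
Proof.
move=> m_gt0 W_ge0 W_ge row col.
pose nz := [pred k : 'I_m * 'I_s | W k.1 k.2 != 0].
pose ps : seq (piece R m s) := [seq (k, W k.1 k.2) | k <- enum nz].
have sum_ps (P : pred 'I_m) (Q : pred 'I_s) :
    \sum_(p <- ps | P p.1.1 && Q p.1.2) p.2 = \sum_(j | P j) \sum_(i | Q i) W j i.
  rewrite big_map big_enum_cond pair_big_dep /= big_andbC big_mkcondr /=.
  by apply: eq_bigr => k _; case: ifPn => // /negPn /eqP ->.
have dps : division ps.
  split.
    by move=> p /mapP[k]; rewrite mem_enum inE => knz ->; rewrite lt0r knz W_ge0.
  split => [j | i].
    transitivity (\sum_(j' | j' == j) \sum_i W j' i); last by rewrite big_pred1_eq.
    by rewrite -sum_ps; apply: eq_bigl => p; rewrite andbT.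
  transitivity (\sum_j \sum_(i' | i' == i) W j i').
    by rewrite -sum_ps.
  by rewrite -(col i); apply: eq_bigr => j _; rewrite big_pred1_eq.
pose j0 := Ordinal m_gt0.
have [i0 /andP[_ W0_gt0]] : exists i, true && (0 < W j0 i).
  by apply: psumr_neq0P => [i _ | ]; rewrite ?row //; apply/eqP/oner_neq0.
have k0nz : nz (j0, i0) by rewrite inE lt0r_neq0.
case: (arg_minP (fun k => W k.1 k.2) k0nz) => k knz kmin.
apply: (le_trans (W_ge _ _ knz)); apply: (le_muffin_f dps); split.
  by apply/mapP; exists (k, W k.1 k.2); rewrite // map_f ?mem_enum.
by move=> p /mapP[k']; rewrite mem_enum => /kmin ? ->.
Qed.

Lemma muffin_f_ge_nat_shares (N : 'I_m -> 'I_s -> nat) k c :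
    (0 < k)%N -> (0 < s)%N -> (0 < m)%N -> (forall j i, N j i = 0 \/ c <= N j i)%N ->
    (forall j, \sum_i N j i = k * s)%N -> (forall i, \sum_j N j i = k * m)%N ->
  c%:R / (k * s)%:R <= muffin_f R m s.
Proof.
move=> k_gt0 s_gt0 m_gt0 N_ge row col.
have ks_gt0 : 0 < (k * s)%:R :> R by rewrite ltr0n muln_gt0 k_gt0.
apply: (muffin_f_ge_shares (W := fun j i => (N j i)%:R / (k * s)%:R)) => //.
- by move=> j i; rewrite divr_ge0.
- move=> j i; case: (N_ge j i) => [-> | cN]; first by rewrite mul0r eqxx.
  by rewrite ler_pM2r ?invr_gt0 // ler_nat.
- by move=> j; rewrite -mulr_suml -natr_sum row divff // lt0r_neq0.
- move=> i; rewrite -mulr_suml -natr_sum col !natrM; field.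
  by rewrite !pnatr_eq0 -!lt0n k_gt0 s_gt0.
Qed.

End DivisionLowerBound.

Lemma big_ordS (T : Type) (idx : T) (op : Monoid.com_law idx) n (F : 'I_n -> T) :
  \big[op/idx]_(i < n) F (ordS i) = \big[op/idx]_(i < n) F i.
Proof. by rewrite [RHS](reindex_inj (@ordS_inj n)). Qed.

Section ThirdsConstruction.
Local Open Scope nat_scope.
Variables (m s : nat).
Hypotheses (s_gt0 : 0 < s) (s_le_m : s <= m).

Definition cut_quo j := j * (3 * m) %/ s.
Definition cut_rem j := j * (3 * m) %% s.
Definition thirds_before i := cut_quo i - 3 * i.
Definition muffin_thirds_below y t := minn (y - 3 * t) 3.

Lemma cut_rem_lt j : cut_rem j < s.
Proof. by rewrite ltn_mod. Qed.

Lemma cut_quo_rem j : cut_quo j * s + cut_rem j = j * (3 * m).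
Proof. exact/esym/divn_eq. Qed.

Lemma leq_cut_quo i : 3 * i <= cut_quo i.
Proof. by rewrite leq_divRL //; nia. Qed.

Lemma cut_quo_step i : cut_quo i + 3 <= cut_quo i.+1.
Proof.
rewrite leq_divRL // mulnDl (leq_trans (leq_add (leq_divM _ _) (leqnn _))) //.
nia.
Qed.

Lemma thirds_before_homo : {homo thirds_before : i j / i <= j}.
Proof.
apply: homo_leq => [//|j i k|i]; first exact: leq_trans.
by have := cut_quo_step i; have := leq_cut_quo i; rewrite /thirds_before; lia.
Qed.

Lemma thirds_before0 : thirds_before 0 = 0.
Proof. by rewrite /thirds_before /cut_quo div0n. Qed.

Lemma thirds_before_last : thirds_before s = 3 * (m - s).
Proof. by rewrite /thirds_before /cut_quo mulnC mulnK //; lia. Qed.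

Lemma sum_muffin_thirds_below y n :
  \sum_(t < n) muffin_thirds_below y t = minn y (3 * n).
Proof.
elim: n => [|n IH]; first by rewrite big_ord0 muln0 minn0.
by rewrite big_ord_recr /= IH /muffin_thirds_below; lia.
Qed.

Lemma muffin_thirds_below_homo t : {homo muffin_thirds_below^~ t : y z / y <= z}.
Proof. by move=> y z yz; rewrite /muffin_thirds_below; lia. Qed.

Lemma thirds_before_le i : i <= s -> thirds_before i <= 3 * (m - s).
Proof. by rewrite -thirds_before_last; apply: thirds_before_homo. Qed.

(* Shares are in units of 1/(3s) of a muffin.  For s = 1 both pieces of muffin 0
   go to student 0. *)
Definition split_share (j : nat) (i : 'I_s) : nat :=
  (if j == i :> nat then 2 * s - cut_rem j else 0)
  + (if j == ordS i :> nat then s + cut_rem j else 0).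

Definition thirds_share (t : nat) (i : 'I_s) : nat :=
  s * (muffin_thirds_below (thirds_before i.+1) t
       - muffin_thirds_below (thirds_before i) t).

Definition share (j : nat) (i : 'I_s) : nat :=
  if j < s then split_share j i else thirds_share (j - s) i.

Lemma share_eq0_or_ge j i : share j i = 0 \/ s <= share j i.
Proof.
rewrite /share /split_share /thirds_share; case: ltnP => _; last by nia.
by have := cut_rem_lt j; case: eqP; case: eqP; lia.
Qed.

Lemma sum_split_share_row j : j < s -> \sum_(i < s) split_share j i = 3 * s.
Proof.
move=> js; rewrite big_split /=.
rewrite (big_ordS _ (fun i : 'I_s => if j == i :> nat then s + cut_rem j else 0)).
rewrite -!big_mkcond.
under eq_bigl do rewrite eq_sym; under [X in _ + X]eq_bigl do rewrite eq_sym.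
rewrite (big_ord1_eq _ (fun=> 2 * s - cut_rem j)) (big_ord1_eq _ (fun=> s + cut_rem j)).
rewrite js.
by have := cut_rem_lt j; lia.
Qed.

Lemma sum_split_share_col i :
  \sum_(j < s) split_share j i = 2 * s - cut_rem i + (s + cut_rem i.+1).
Proof.
rewrite big_split /= -!big_mkcond.
rewrite (big_ord1_eq _ (fun j => 2 * s - cut_rem j)) ltn_ord.
rewrite (big_ord1_eq _ (fun j => s + cut_rem j)) ltn_pmod //.
by rewrite /cut_rem modnMml.
Qed.

Lemma sum_thirds_share_row t : t < m - s -> \sum_(i < s) thirds_share t i = 3 * s.
Proof.
move=> t_lt; pose f i := muffin_thirds_below (thirds_before i) t.
have f_homo : {homo f : x y / x <= y}.
  by move=> x y /thirds_before_homo; apply: muffin_thirds_below_homo.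
rewrite -big_distrr -(big_mkord xpredT (fun i => f i.+1 - f i)) telescope_sumn //.
by rewrite /= /f thirds_before_last thirds_before0 /muffin_thirds_below; lia.
Qed.

Lemma sum_thirds_share_col i :
  \sum_(t < m - s) thirds_share t i = s * (thirds_before i.+1 - thirds_before i).
Proof.
rewrite -big_distrr /= sumnB; last first.
  by move=> t _; apply/muffin_thirds_below_homo/thirds_before_homo.
by rewrite !sum_muffin_thirds_below !(minn_idPl (thirds_before_le _)) // ltnW.
Qed.

Lemma sum_share_row j : j < m -> \sum_(i < s) share j i = 3 * s.
Proof.
move=> jm; rewrite /share; case: (ltnP j s) => [js | sj].
  exact: sum_split_share_row.
by apply: sum_thirds_share_row; lia.
Qed.

Lemma sum_share_col i : \sum_(j < m) share j i = 3 * m.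
Proof.
have -> : \sum_(j < m) share j i = \sum_(j < s + (m - s)) share j i by rewrite subnKC.
rewrite big_split_ord /=.
under eq_bigr => j _ do rewrite /share ltn_ord.
under [X in _ + X]eq_bigr => t _ do rewrite /share ltnNge leq_addr /= addKn.
rewrite sum_split_share_col sum_thirds_share_col.
have := cut_quo_rem i; have := cut_quo_rem i.+1.
have := cut_quo_step i; have := leq_cut_quo i.
have := cut_rem_lt i; have := cut_rem_lt i.+1.
rewrite /thirds_before; nia.
Qed.

End ThirdsConstruction.

Theorem lemma8 (R : realType) (m s : nat) (hs : (0 < s)%N) (hms : (s < m)%N) :
  (1 / 3 : R) <= muffin_f R m s.
Proof.
have s_le_m := ltnW hms.
have -> : 1 / 3 = s%:R / (3 * s)%:R :> R.
  by rewrite natrM; field; rewrite pnatr_eq0 -lt0n hs.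
apply: (@muffin_f_ge_nat_shares R m s (fun j i => share m j i)) => //.
- exact: ltn_trans hms.
- by move=> j i; apply: share_eq0_or_ge.
- by move=> j; apply: sum_share_row.
- by move=> i; apply: sum_share_col.
Qed.
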